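(* Let $k>0$, $d\ge 0$, $a>0$. Suppose that for some $\lambda>0$ $$\frac{a}{k}>\left[1+\frac{k}{\frac{k\lambda}{\arctan(k\lambda)}-1}\right](1+d\lambda^2).$$ Then there exists a real number $\mu>0$ satisfying the dispersion relation $$\frac12\int_{-1}^{1}\frac{1-k+\mathrm{i}\,\frac{a\lambda s}{1+d\lambda^2}}{1+k\mu+\mathrm{i}k\lambda s}\,ds=1 .$$ Equivalently, the linearized system (L) has a nonzero solution $g(x,\mathbf v)=\hat g(\mathbf v)e^{\mathrm{i}\lambda x}$, $S_g=\hat Se^{\mathrm{i}\lambda x}$ with a real growth rate $\mu>0$. Consequently, if $a/k$ exceeds the infimum over $\lambda>0$ of the right-hand side above, then the constant state $f\equiv S\equiv 1$ of the kinetic chemotaxis system is linearly unstable. Moreover, the displayed inequality forces $\beta:=\frac{a}{k(1+d\lambda^2)}>1$, that is, $0<\lambda<\sqrt{(a/k-1)/d}$ when $d>0$.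
   Context: Let $S^2\subset\mathbb{R}^3$ be the unit sphere, with surface measure $d\Omega$ (total mass $4\pi$). Write $\mathbf{v}=(v_1,v_2,v_3)\in S^2$ and $x\in\mathbb{R}$. Fix parameters $k>0$ (scaled mean run time), $d\ge0$ (diffusion coefficient), and $a=F'(0)>0$ (stiffness of the chemotactic response function $F$ at $0$). The linearized system (L), for the unknowns $g(x,\mathbf v)$ and $S_g(x)$ and a growth rate $\mu\in\mathbb{C}$, is $$k\big(\mu g+v_1\partial_x g\big)=\rho_g+a\,v_1\partial_x S_g-g-k\rho_g,\qquad -d\,\partial_{xx}S_g+S_g=\rho_g,\qquad \rho_g(x)=\frac1{4\pi}\int_{S^2}g(x,\mathbf v)\,d\Omega(\mathbf v).$$ This system is the linearization, around the constant state $f\equiv S\equiv\rho\equiv1$ with perturbations proportional to $e^{\mu t}$, of the kinetic chemotaxis system $$\partial_t f+v_1\partial_x f=\frac1k\Big\{\frac1{4\pi}\int_{S^2}K[D_t\log S|_{\mathbf v'}]f(\mathbf v')\,d\Omega(\mathbf v')-K[D_t\log S|_{\mathbf v}]f(\mathbf v)\Big\}+P[\rho]f ,$$ $$-d\,\partial_{xx}S+S=\rho,\qquad \rho=\frac1{4\pi}\int_{S^2} f\,d\Omega .$$ Here: - $K[X]=1-F[X]$, where $F$ is smooth and increasing with $F(0)=0$ and $F(X)\to\pm\chi$ as $X\to\pm\infty$, for some $0\le\chi<1$; - $D_t X|_{\mathbf v}=\partial_t X+v_1\partial_x X$; - $P$ satisfies $P(1)=0$ and $P'(1)=-1$. ''Linearly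 unstable'' means that (L) has a nonzero solution of the form $\hat g(\mathbf v)e^{\mathrm{i}\lambda x}$ with $\mathrm{Re}\,\mu>0$. *)

From Stdlib Require Import Reals.
Open Scope R_scope.

Definition instab_rhs (k d lam : R) : R :=
  (1 + k / (k * lam / atan (k * lam) - 1)) * (1 + d * lam ^ 2).

(* The complex integrand of the dispersion relation,
     (1 - k + i * (a*lam*s/(1+d*lam^2))) / (1 + k*mu + i*k*lam*s),
   represented by its real and imaginary parts, computed with the literal
   complex division formula (p + i q)/(r + i t) = ((p r + q t) + i (q r - p t))/(r^2+t^2). *)
Definition disp_num_re (k : R) : R := 1 - k.
Definition disp_num_im (k d a lam s : R) : R := a * lam * s / (1 + d * lam ^ 2).
Definition disp_den_re (k mu : R) : R := 1 + k * mu.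
Definition disp_den_im (k lam s : R) : R := k * lam * s.

Definition disp_re (k d a lam mu : R) (s : R) : R :=
  (disp_num_re k * disp_den_re k mu + disp_num_im k d a lam s * disp_den_im k lam s)
  / (disp_den_re k mu ^ 2 + disp_den_im k lam s ^ 2).

Definition disp_im (k d a lam mu : R) (s : R) : R :=
  (disp_num_im k d a lam s * disp_den_re k mu - disp_num_re k * disp_den_im k lam s)
  / (disp_den_re k mu ^ 2 + disp_den_im k lam s ^ 2).

Definition dispersion_relation (k d a lam mu : R) : Prop :=
  (exists pr : Riemann_integrable (disp_re k d a lam mu) (-1) 1,
      / 2 * RiemannInt pr = 1) /\
  (exists pi : Riemann_integrable (disp_im k d a lam mu) (-1) 1,
      / 2 * RiemannInt pi = 0).

(* With b = a/(k(1+dλ²)), t = kλ and r = 1 + kμ, the real part of the integrand is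
   b + ((1-k) - b r) r / (r² + t² s²) and the imaginary part is odd in s, so the
   dispersion relation reduces to the scalar equation
     b + ((1-k) - b r) atan(t/r) / t = 1.
   At r = 1 this left-hand side exceeds 1 exactly under the instability condition,
   while it tends to 0 as r → ∞; the intermediate value theorem gives a root r > 1,
   that is, a growth rate μ = (r-1)/k > 0. Since atan t < t, the condition at r = 1,
   (b - 1)(t - atan t) > k atan t, also forces b > 1. *)
From Stdlib Require Import Reals Lra Psatz Ranalysis5.
From Coquelicot Require Import Coquelicot.
Open Scope R_scope.

Lemma atan_pos (y : R) : 0 < y -> 0 < atan y.
Proof. intros Hy. rewrite <- atan_0. exact (atan_increasing 0 y Hy). Qed.

Lemma atan_bounds (y : R) : 0 < y -> y / (1 + y ^ 2) < atan y < y.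
Proof.
  intros Hy.
  destruct (MVT_cor2 atan (fun x => / (1 + x ^ 2)) 0 y Hy) as [c [Heq Hc]].
  { intros x _. apply derivable_pt_lim_atan. }
  rewrite atan_0, Rminus_0_r in Heq.
  assert (Hc2 : atan y * (1 + c ^ 2) = y) by (rewrite Heq; field; nra).
  pose proof (atan_pos y Hy) as Hpos.
  split.
  - apply Rmult_lt_reg_r with (1 + y ^ 2); [nra |].
    unfold Rdiv. rewrite Rmult_assoc, Rinv_l, Rmult_1_r by nra.
    assert (0 < atan y * (y ^ 2 - c ^ 2)) by (apply Rmult_lt_0_compat; nra).
    nra.
  - assert (0 < atan y * c ^ 2) by (apply Rmult_lt_0_compat; nra).
    nra.
Qed.

Lemma is_RInt_RiemannInt (f : R -> R) (a b v : R) :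
  is_RInt f a b v -> exists pr : Riemann_integrable f a b, RiemannInt pr = v.
Proof.
  intros Hf.
  exists (ex_RInt_Reals_0 _ _ _ (ex_intro _ _ Hf)).
  rewrite <- RInt_Reals.
  exact (is_RInt_unique _ _ _ _ Hf).
Qed.

(* Half the integral of [disp_re] over [-1, 1], with b = a/(k(1+dλ²)), c = 1-k,
   t = kλ and r = 1 + kμ. *)
Definition disp_re_mean (b c t r : R) : R := b + (c - b * r) * atan (t / r) / t.

Section DispersionIntegrals.

Variables k d a lam mu : R.
Hypothesis hk : 0 < k.
Hypothesis hd : 0 <= d.
Hypothesis hlam : 0 < lam.
Hypothesis hr : 0 < 1 + k * mu.

Lemma is_RInt_disp_re :
  is_RInt (disp_re k d a lam mu) (-1) 1
    (2 * disp_re_mean (a / (k * (1 + d * lam ^ 2))) (1 - k) (k * lam) (1 + k * mu)).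
Proof.
  set (r := 1 + k * mu) in *.
  set (D := 1 + d * lam ^ 2).
  assert (hD : 0 < D) by (unfold D; nra).
  set (b := a / (k * D)).
  set (t := k * lam).
  set (G := fun s => b * s + ((1 - k) - b * r) / t * atan (t / r * s)).
  replace (2 * disp_re_mean b (1 - k) t r) with (minus (G 1) (G (-1))).
  2:{ unfold G, minus, plus, opp, disp_re_mean; simpl.
      replace (t / r * 1) with (t / r) by ring.
      replace (t / r * -1) with (- (t / r)) by ring.
      rewrite atan_opp. field. unfold t. nra. }
  apply (is_RInt_derive G).
  - intros s _. unfold G. auto_derive; [easy |].
    unfold disp_re, disp_num_re, disp_num_im, disp_den_re, disp_den_im.
    fold r D. unfold b, t. field. repeat split; nra.
  - intros s _. apply (@ex_derive_continuous R_AbsRing R_NormedModule).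
    unfold disp_re, disp_num_re, disp_num_im, disp_den_re, disp_den_im.
    auto_derive. fold r. nra.
Qed.

(* The numerator of [disp_im] is linear in s and its denominator even, so
   [ln (r² + t² s²)] gives an even antiderivative. *)
Lemma is_RInt_disp_im : is_RInt (disp_im k d a lam mu) (-1) 1 0.
Proof.
  set (r := 1 + k * mu) in *.
  set (D := 1 + d * lam ^ 2).
  assert (hD : 0 < D) by (unfold D; nra).
  set (t := k * lam).
  set (m := a * lam * r / D - (1 - k) * t).
  set (G := fun s => m / (2 * t ^ 2) * ln (r ^ 2 + t ^ 2 * s ^ 2)).
  replace 0 with (minus (G 1) (G (-1))).
  2:{ replace (G (-1)) with (G 1) by (unfold G; do 3 f_equal; ring).
      unfold minus, plus, opp; simpl. ring. }
  apply (is_RInt_derive G).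
  - intros s _. unfold G. auto_derive; [nra |].
    unfold disp_im, disp_num_re, disp_num_im, disp_den_re, disp_den_im.
    fold r D. unfold m, t. field. repeat split; nra.
  - intros s _. apply (@ex_derive_continuous R_AbsRing R_NormedModule).
    unfold disp_im, disp_num_re, disp_num_im, disp_den_re, disp_den_im.
    auto_derive. fold r. nra.
Qed.

Lemma dispersion_relation_of_re_mean :
  disp_re_mean (a / (k * (1 + d * lam ^ 2))) (1 - k) (k * lam) (1 + k * mu) = 1 ->
  dispersion_relation k d a lam mu.
Proof.
  intros Hmean. split.
  - destruct (is_RInt_RiemannInt _ _ _ _ is_RInt_disp_re) as [pr Hpr].
    exists pr. rewrite Hpr, Hmean. field.
  - destruct (is_RInt_RiemannInt _ _ _ _ is_RInt_disp_im) as [pr Hpr].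
    exists pr. rewrite Hpr. ring.
Qed.

End DispersionIntegrals.

Section DispersionRoot.

Variables b c t : R.
Hypothesis hb : 0 <= b.
Hypothesis ht : 0 < t.

Lemma disp_re_mean_1_gt1 :
  (b - 1) * (t - atan t) > (1 - c) * atan t -> 1 < disp_re_mean b c t 1.
Proof.
  intros Hcond. unfold disp_re_mean. rewrite Rdiv_1_r, Rmult_1_r.
  apply Rmult_lt_reg_r with t; [exact ht |].
  unfold Rdiv. rewrite Rmult_plus_distr_r, (Rmult_assoc _ (/ t)), Rinv_l by lra.
  nra.
Qed.

(* From atan(t/r) > t r / (r² + t²) and atan(t/r) < t/r one gets
   disp_re_mean b c t r < b t²/r² + |c|/r. *)
Lemma disp_re_mean_lt1 (r : R) : 1 + Rabs c + b * t ^ 2 <= r -> disp_re_mean b c t r < 1.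
Proof.
  intros Hrc.
  assert (Hc : 0 <= Rabs c) by apply Rabs_pos.
  assert (Hr : 1 <= r) by nra.
  assert (Htr : 0 < t / r) by (apply Rdiv_lt_0_compat; lra).
  destruct (atan_bounds (t / r) Htr) as [Hlow Hup].
  set (A := atan (t / r)) in *.
  assert (HA : 0 < A) by exact (atan_pos _ Htr).
  assert (Hup' : A * r < t).
  { apply Rmult_lt_compat_r with (r := r) in Hup; [| lra].
    unfold Rdiv in Hup. rewrite Rmult_assoc, Rinv_l, Rmult_1_r in Hup by lra.
    exact Hup. }
  assert (Hlow' : t * r < A * (r ^ 2 + t ^ 2)).
  { replace (t / r / (1 + (t / r) ^ 2)) with (t * r / (r ^ 2 + t ^ 2)) in Hlow
      by (field; split; nra).
    apply Rmult_lt_compat_r with (r := r ^ 2 + t ^ 2) in Hlow; [| nra].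
    unfold Rdiv in Hlow. rewrite Rmult_assoc, Rinv_l, Rmult_1_r in Hlow by nra.
    exact Hlow. }
  assert (Hcterm : c * A * r <= Rabs c * t).
  { assert (c * A <= Rabs c * A) by (apply Rmult_le_compat_r; [lra | apply Rle_abs]).
    nra. }
  assert (Hbterm : (b * t - b * r * A) * r ^ 2 <= b * t ^ 3).
  { assert (b * r * (t * r) <= b * r * (A * (r ^ 2 + t ^ 2)))
      by (apply Rmult_le_compat_l; nra).
    assert (b * t ^ 2 * (A * r) <= b * t ^ 2 * t)
      by (apply Rmult_le_compat_l; nra).
    nra. }
  assert (Hbterm' : (b * t - b * r * A) * r <= b * t ^ 3).
  { destruct (Rle_or_lt 0 (b * t - b * r * A)) as [Hnn | Hneg].
    - assert (0 <= (b * t - b * r * A) * (r * (r - 1))) by (apply Rmult_le_pos; nra).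
      nra.
    - assert (0 <= b * t ^ 3) by (apply Rmult_le_pos; [lra | apply pow_le; lra]).
      nra. }
  assert (Hsum : (b * t + c * A - b * r * A) * r < t * r).
  { assert (Rabs c * t + b * t ^ 3 <= t * (r - 1)) by nra.
    nra. }
  unfold disp_re_mean. fold A.
  apply Rmult_lt_reg_r with t; [exact ht |].
  unfold Rdiv. rewrite Rmult_plus_distr_r, (Rmult_assoc _ (/ t)), Rinv_l by lra.
  nra.
Qed.

Lemma disp_re_mean_root :
  (b - 1) * (t - atan t) > (1 - c) * atan t ->
  exists r, 1 < r /\ disp_re_mean b c t r = 1.
Proof.
  intros Hcond.
  set (R0 := 2 + Rabs c + b * t ^ 2).
  assert (HR0 : 1 < R0).
  { unfold R0. assert (0 <= Rabs c) by apply Rabs_pos. nra. }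
  pose proof (disp_re_mean_1_gt1 Hcond) as H1.
  assert (HR : disp_re_mean b c t R0 < 1) by (apply disp_re_mean_lt1; unfold R0; lra).
  destruct (IVT_interv (fun r => 1 - disp_re_mean b c t r) 1 R0) as [r [Hr Hroot]].
  - intros r Hr. apply continuity_pt_filterlim.
    apply (@ex_derive_continuous R_AbsRing R_NormedModule (fun r => 1 - disp_re_mean b c t r)).
    unfold disp_re_mean. auto_derive. repeat split; nra.
  - exact HR0.
  - lra.
  - lra.
  - exists r. split; [| lra].
    destruct (proj1 Hr) as [Hlt | Heq]; [exact Hlt |].
    subst r. lra.
Qed.

End DispersionRoot.

Lemma instab_rhs_lt_atan_cond (k d a lam : R) :
  0 < k -> 0 <= d -> 0 < lam -> a / k > instab_rhs k d lam ->
  (a / (k * (1 + d * lam ^ 2)) - 1) * (k * lam - atan (k * lam)) > k * atan (k * lam).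
Proof.
  intros hk hd hlam hcond.
  set (D := 1 + d * lam ^ 2) in *.
  assert (hD : 0 < D) by (unfold D; nra).
  set (t := k * lam) in *.
  assert (ht : 0 < t) by (unfold t; nra).
  destruct (atan_bounds t ht) as [_ Hup].
  set (X := atan t) in *.
  assert (HX : 0 < X) by exact (atan_pos _ ht).
  unfold instab_rhs in hcond. fold D t X in hcond.
  replace (k / (t / X - 1)) with (k * X / (t - X)) in hcond by (field; lra).
  replace (a / (k * D)) with (a / k / D) by (field; lra).
  assert (Hb : (1 + k * X / (t - X)) < a / k / D).
  { apply Rmult_lt_reg_r with D; [exact hD |].
    unfold Rdiv at 2. rewrite Rmult_assoc, Rinv_l, Rmult_1_r by lra. exact hcond. }
  apply Rmult_lt_compat_r with (r := t - X) in Hb; [| lra].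
  replace ((1 + k * X / (t - X)) * (t - X)) with (t - X + k * X) in Hb by (field; lra).
  lra.
Qed.

Lemma lt_sqrt_of_coef_gt1 (k d a lam : R) :
  0 < k -> 0 < d -> 0 < lam -> a / (k * (1 + d * lam ^ 2)) > 1 ->
  lam < sqrt ((a / k - 1) / d).
Proof.
  intros hk hd hlam hb.
  assert (hD : 0 < 1 + d * lam ^ 2) by nra.
  assert (Hak : 1 + d * lam ^ 2 < a / k).
  { replace (a / k) with (a / (k * (1 + d * lam ^ 2)) * (1 + d * lam ^ 2)) by (field; lra).
    nra. }
  assert (Hl2 : lam ^ 2 < (a / k - 1) / d).
  { apply Rmult_lt_reg_r with d; [exact hd |].
    unfold Rdiv. rewrite Rmult_assoc, Rinv_l by lra. nra. }
  rewrite <- (sqrt_pow2 lam) by lra.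
  apply sqrt_lt_1_alt. split; [nra | exact Hl2].
Qed.

Theorem mainTheorem2 (k d a lam : R)
  (hk : 0 < k) (hd : 0 <= d) (ha : 0 < a) (hlam : 0 < lam)
  (hcond : a / k > instab_rhs k d lam) :
  (exists mu : R, 0 < mu /\ dispersion_relation k d a lam mu) /\
  a / (k * (1 + d * lam ^ 2)) > 1 /\
  (0 < d -> lam < sqrt ((a / k - 1) / d)).
Proof.
  set (b := a / (k * (1 + d * lam ^ 2))).
  pose proof (instab_rhs_lt_atan_cond k d a lam hk hd hlam hcond) as Hspec. fold b in Hspec.
  assert (ht : 0 < k * lam) by nra.
  destruct (atan_bounds (k * lam) ht) as [_ Hup].
  pose proof (atan_pos _ ht) as Hatan.
  assert (Hb : b > 1) by nra.
  split; [| split].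
  - replace k with (1 - (1 - k)) in Hspec at 3 by ring.
    destruct (disp_re_mean_root b (1 - k) (k * lam) ltac:(lra) ht Hspec) as [r [Hr Hroot]].
    exists ((r - 1) / k). split; [apply Rdiv_lt_0_compat; lra |].
    assert (Er : 1 + k * ((r - 1) / k) = r) by (field; lra).
    apply dispersion_relation_of_re_mean; [exact hk | exact hd | exact hlam | lra |].
    rewrite Er. exact Hroot.
  - exact Hb.
  - intros hd0. exact (lt_sqrt_of_coef_gt1 k d a lam hk hd0 hlam Hb).
Qed.
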